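(* Let $\mathcal V$ be a variety with a difference term $d$ and let $A\in\mathcal V$, $n\ge1$. Then $A$ is $n$-step nilpotent if and only if \[A\cong Q_n\otimes^{T_{n-1}}\big(Q_{n-1}\otimes^{T_{n-2}}\cdots(Q_2\otimes^{T_1}Q_1)\cdots\big)\] for some abelian algebras $Q_1,\dots,Q_n\in\mathcal V$, where for each $k\ge2$ the product $Q_k\otimes^{T_{k-1}}(\cdots)$ is formed using the binary operation $x+y:=d^{Q_k}(x,0_k,y)$ on $Q_k$ for some element $0_k\in Q_k$, and arbitrary transfer maps $T_{k-1}$.
   Context: All algebras are in the sense of universal algebra, in a fixed signature $\tau$. For congruences $\alpha,\beta$, $[\alpha,\beta]$ is the term-condition (TC) commutator; $1$ is the total relation and $0$ equality. An algebra is abelian if $[1,1]=0$. Define $[\alpha]_1=[\alpha,\alpha]$ and $[\alpha]_{k+1}=[\alpha,[\alpha]_k]$; $A$ is $n$-step nilpotent if $[1_A]_n=0$. A difference term for $\mathcal V$ is a ternary term $d$ such that for every $A\in\mathcal V$, $\theta\in\operatorname{Con}A$, $(a,b)\in\theta$: $d(a,a,b)=b$ and $(d(a,b,b),a)\in[\theta,\theta]$. Given algebras $B,Q$ in signature $\tau$, a binary operation $+$ on $B$, and maps $T_f:Q^{\operatorname{ar}f}\to B$ ($f\in\tau$), the algebra $B\otimes^{T}Q$ has universe $B\times Q$ and operations $F_f((b_1,q_1),\dots,(b_n,q_n))=\big(f^B(b_1,\dots,b_n)+T_f(q_1,\dots,q_n),\,f^Q(q_1,\dots,q_n)\big)$.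 *)

From mathcomp Require Import all_boot.
Set Implicit Arguments. Unset Strict Implicit. Unset Printing Implicit Defensive.

Record signature := Signature { sym : Type; arity : sym -> nat }.

Record algebra (tau : signature) := Algebra {
  carrier :> Type;
  op : forall f : sym tau, ('I_(arity f) -> carrier) -> carrier }.
Arguments op {tau} a f _ : rename.

Inductive term (tau : signature) (V : Type) : Type :=
| tvar : V -> term tau V
| tapp : forall f : sym tau, ('I_(arity f) -> term tau V) -> term tau V.

Fixpoint eval {tau : signature} {V : Type} (A : algebra tau) (env : V -> A)
    (t : term tau V) : A :=
  match t with
  | tvar v => env v
  | tapp f ts => op A f (fun i => @eval tau V A env (ts i))
  end.
Arguments eval {tau V} A env t.

Section UA.
Variable tau : signature.

Definition in_variety (Sigma : term tau nat -> term tau nat -> Prop)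
    (A : algebra tau) : Prop :=
  forall s t, Sigma s t -> forall env : nat -> A, eval A env s = eval A env t.

Definition is_congruence (A : algebra tau) (r : A -> A -> Prop) : Prop :=
  [/\ (forall x, r x x), (forall x y, r x y -> r y x),
      (forall x y z, r x y -> r y z -> r x z) &
      (forall f (x y : 'I_(arity f) -> A),
          (forall i, r (x i) (y i)) -> r (op A f x) (op A f y))].

Definition total_rel (A : Type) : A -> A -> Prop := fun _ _ => True.

Definition sum_env (A : Type) n m (a : 'I_n -> A) (b : 'I_m -> A)
    (v : 'I_n + 'I_m) : A :=
  match v with inl i => a i | inr j => b j end.

Definition centralizes (A : algebra tau) (alpha beta delta : A -> A -> Prop) : Prop :=
  forall n m (t : term tau ('I_n + 'I_m)) (a a' : 'I_n -> A) (b b' : 'I_m -> A),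
    (forall i, alpha (a i) (a' i)) -> (forall j, beta (b j) (b' j)) ->
    delta (eval A (sum_env a b) t) (eval A (sum_env a b') t) ->
    delta (eval A (sum_env a' b) t) (eval A (sum_env a' b') t).

Definition tc_comm (A : algebra tau) (alpha beta : A -> A -> Prop) : A -> A -> Prop :=
  fun x y => forall delta, is_congruence delta -> centralizes alpha beta delta -> delta x y.

(* iter_comm alpha k = [alpha]_k for k >= 1 ([alpha]_1 = [alpha,alpha],
   [alpha]_{k+1} = [alpha,[alpha]_k]); iter_comm alpha 0 = alpha. *)
Fixpoint iter_comm (A : algebra tau) (alpha : A -> A -> Prop) (k : nat) : A -> A -> Prop :=
  match k with
  | 0 => alpha
  | k'.+1 => tc_comm alpha (iter_comm alpha k')
  end.
Arguments eval {tau V} A env t.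

Definition nilpotent (A : algebra tau) (n : nat) : Prop :=
  forall x y : A, iter_comm (@total_rel A) n x y <-> x = y.

Definition abelian (A : algebra tau) : Prop :=
  forall x y : A, tc_comm (@total_rel A) (@total_rel A) x y <-> x = y.

Definition env3 (A : Type) (x y z : A) : 'I_3 -> A :=
  fun i => match val i with 0 => x | 1 => y | _ => z end.

Definition term3 (A : algebra tau) (d : term tau 'I_3) (x y z : A) : A :=
  eval A (env3 x y z) d.

Definition difference_term (Sigma : term tau nat -> term tau nat -> Prop)
    (d : term tau 'I_3) : Prop :=
  forall A : algebra tau, in_variety Sigma A ->
  forall theta : A -> A -> Prop, is_congruence theta ->
  forall a b : A, theta a b ->
    term3 d a a b = b /\ tc_comm theta theta (term3 d a b b) a.

Definition otimes (B Q : algebra tau) (plus : B -> B -> B)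
    (T : forall f : sym tau, ('I_(arity f) -> Q) -> B) : algebra tau :=
  @Algebra tau (B * Q)%type
    (fun f x => (plus (op B f (fun i => (x i).1)) (T f (fun i => (x i).2)),
                 op Q f (fun i => (x i).2))).

Definition is_hom (A B : algebra tau) (h : A -> B) : Prop :=
  forall f (x : 'I_(arity f) -> A), h (op A f x) = op B f (fun i => h (x i)).

Definition isomorphic (A B : algebra tau) : Prop :=
  exists (h : A -> B) (g : B -> A),
    [/\ is_hom h, cancel h g & cancel g h].

Inductive iterated (Sigma : term tau nat -> term tau nat -> Prop)
    (d : term tau 'I_3) : nat -> algebra tau -> Prop :=
| iterated_one (Q : algebra tau) :
    in_variety Sigma Q -> abelian Q -> iterated Sigma d 1 Q
| iterated_succ k (C Q : algebra tau) (zero : Q)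
    (T : forall f : sym tau, ('I_(arity f) -> C) -> Q) :
    iterated Sigma d k C -> in_variety Sigma Q -> abelian Q ->
    iterated Sigma d k.+1 (otimes (fun x y => term3 d x zero y) T).

End UA.

(* The proof rests on the affine calculus of a congruence al centralized by
   the total relation: the term condition yields a "four corner" cancellation
   principle, from which d commutes with the basic operations on al-related
   arguments and d(y, x, -) composes associatively on al-blocks.
   - Converse direction: in Q (x)^T C with Q abelian, the first component of
     a term value splits as d(value in Q, value at 0, transfer part), so 1
     centralizes the kernel of the projection to C; by induction along the
     tower, [1]_k vanishes in any algebra isomorphic to a k-fold extension.
   - Forward direction: for A nilpotent of class n+1, al = [1_A]_n is
     centralized by 1, A/al is nilpotent of class n, and A is isomorphic to
     (block of o) (x)^T (A/al), the block being abelian; induction finishes. *)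
From mathcomp Require Import all_boot.
From Stdlib Require Import FunctionalExtensionality ProofIrrelevance ClassicalEpsilon Classical PropExtensionality.

Set Implicit Arguments. Unset Strict Implicit. Unset Printing Implicit Defensive.

Section Terms.
Variable tau : signature.

Fixpoint subst_term (V W : Type) (s : V -> term tau W) (t : term tau V) : term tau W :=
  match t with
  | tvar v => s v
  | tapp f ts => tapp (fun i => subst_term s (ts i))
  end.

Lemma eval_subst (A : algebra tau) V W (s : V -> term tau W) (env : W -> A) t :
  eval A env (subst_term s t) = eval A (fun v => eval A env (s v)) t.
Proof.
elim: t => [v|f ts IH] //=; congr (op A f).
by apply: functional_extensionality => i; exact: IH.
Qed.

Definition rename_term V W (g : V -> W) (t : term tau V) : term tau W :=
  subst_term (fun v => tvar tau (g v)) t.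

Lemma eval_rename (A : algebra tau) V W (g : V -> W) (env : W -> A) t :
  eval A env (rename_term g t) = eval A (fun v => env (g v)) t.
Proof. by rewrite /rename_term eval_subst. Qed.

Lemma eval_hom (A B : algebra tau) (h : A -> B) V (env : V -> A) t :
  is_hom h -> h (eval A env t) = eval B (fun v => h (env v)) t.
Proof.
move=> hh; elim: t => [v|f ts IH] //=; rewrite hh; congr (op B f).
by apply: functional_extensionality => i; exact: IH.
Qed.

Lemma eval_cong (A : algebra tau) (r : A -> A -> Prop) V (e e' : V -> A) t :
  is_congruence r -> (forall v, r (e v) (e' v)) -> r (eval A e t) (eval A e' t).
Proof. by case=> _ _ _ hop he; elim: t => [v|f ts IH] //=; exact: hop. Qed.

Definition join_env (A X Y : Type) (a : X -> A) (b : Y -> A) (v : X + Y) : A :=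
  match v with inl x => a x | inr y => b y end.

Lemma comp_join_env (A B X Y : Type) (h : A -> B) (a : X -> A) (b : Y -> A) :
  (fun v => h (join_env a b v)) = join_env (fun x => h (a x)) (fun y => h (b y)).
Proof. by apply: functional_extensionality => -[x|y]. Qed.

End Terms.

Section Commutators.
Variable tau : signature.
Implicit Types A : algebra tau.

Lemma total_cong A : is_congruence (@total_rel A).
Proof. by split. Qed.

Lemma eq_cong A : is_congruence (@eq A).
Proof.
split=> //; first by move=> x y z ->.
by move=> f x y h; congr (op A f); exact: functional_extensionality.
Qed.

Lemma cong_refl A (r : A -> A -> Prop) x : is_congruence r -> r x x.
Proof. by case. Qed.

Lemma centralizes_fin A (al be de : A -> A -> Prop) :
  centralizes al be de ->
  forall (X Y : finType) (t : term tau (X + Y)) (a a' : X -> A) (b b' : Y -> A),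
    (forall x, al (a x) (a' x)) -> (forall y, be (b y) (b' y)) ->
    de (eval A (join_env a b) t) (eval A (join_env a b') t) ->
    de (eval A (join_env a' b) t) (eval A (join_env a' b') t).
Proof.
move=> hC X Y t a a' b b' ha hb.
pose g (v : X + Y) : 'I_#|X| + 'I_#|Y| :=
  match v with inl x => inl (enum_rank x) | inr y => inr (enum_rank y) end.
have E (a1 : X -> A) (b1 : Y -> A) : eval A (join_env a1 b1) t =
    eval A (sum_env (fun i => a1 (enum_val i)) (fun j => b1 (enum_val j))) (rename_term g t).
  rewrite eval_rename; congr (eval A _ t).
  by apply: functional_extensionality => -[x|y] /=; rewrite enum_rankK.
by rewrite !E; apply: hC => [i|j]; [exact: ha | exact: hb].
Qed.

Lemma tc_comm_cong A (al be : A -> A -> Prop) : is_congruence (tc_comm al be).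
Proof.
split.
- by move=> x de [hr _ _ _] _.
- by move=> x y h de hde hc; case: (hde) => _ hs _ _; apply: hs; apply: h.
- move=> x y z h1 h2 de hde hc; case: (hde) => _ _ ht _.
  exact: ht (h1 _ hde hc) (h2 _ hde hc).
- by move=> f x y h de hde hc; case: (hde) => _ _ _ ho; apply: ho => i; apply: h.
Qed.

Lemma tc_comm_centralizes A (al be : A -> A -> Prop) :
  centralizes al be (tc_comm al be).
Proof.
move=> n m t a a' b b' ha hb h de hde hc.
by apply: (hc _ _ _ a) => //; exact: h.
Qed.

Lemma centralizes_eq A (al be de : A -> A -> Prop) :
  (forall x y, de x y <-> x = y) -> centralizes al be de -> centralizes al be eq.
Proof.
move=> hde hc n m t a a' b b' ha hb h.
by apply/hde; apply: (hc _ _ _ a) => //; exact/hde.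
Qed.

Lemma centralizes_sub A (al be al' be' de : A -> A -> Prop) :
  (forall x y, al' x y -> al x y) -> (forall x y, be' x y -> be x y) ->
  centralizes al be de -> centralizes al' be' de.
Proof.
move=> h1 h2 hc n m t a a' b b' ha hb.
by apply: hc => [i|j]; [exact: h1 | exact: h2].
Qed.

Lemma tc_comm_trivial A (al be : A -> A -> Prop) :
  centralizes al be eq -> forall x y, tc_comm al be x y <-> x = y.
Proof.
move=> hc x y; split; first by move=> h; exact: h (eq_cong A) hc.
by move=> ->; apply: cong_refl; exact: tc_comm_cong.
Qed.

Lemma abelian_centralizes A :
  abelian A -> centralizes (@total_rel A) (@total_rel A) eq.
Proof. by move=> hab; apply: (centralizes_eq hab); exact: tc_comm_centralizes. Qed.

Lemma iter_comm_cong A k : is_congruence (iter_comm (@total_rel A) k).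
Proof. by case: k => [|k]; [exact: total_cong | exact: tc_comm_cong]. Qed.

Lemma iter_comm_succ A k x y :
  iter_comm (@total_rel A) k.+1 x y -> iter_comm (@total_rel A) k x y.
Proof.
move=> H; apply: (H _ (iter_comm_cong A k)) => n m t a a' b b' _ hb _.
apply: eval_cong; first exact: iter_comm_cong.
by move=> -[i|j] /=; [apply: cong_refl; exact: iter_comm_cong | apply: hb].
Qed.

End Commutators.

(* A single "four corner" consequence of the term condition implies that d
   commutes with the basic operations on al-related arguments and that
   d(y,x,-) is associative in the appropriate sense. *)
Section Affine.
Variable tau : signature.
Variable d : term tau 'I_3.

Definition d_term V (t1 t2 t3 : term tau V) : term tau V :=
  subst_term (fun i : 'I_3 => match val i with 0 => t1 | 1 => t2 | _ => t3 end) d.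

Lemma eval_d_term (A : algebra tau) V (env : V -> A) t1 t2 t3 :
  eval A env (d_term t1 t2 t3) =
  term3 d (eval A env t1) (eval A env t2) (eval A env t3).
Proof.
rewrite /d_term eval_subst /term3; congr (eval A _ d).
by apply: functional_extensionality => -[[|[|k]] hk].
Qed.

Variable A : algebra tau.
Variable al : A -> A -> Prop.
Hypothesis hal : is_congruence al.
Hypothesis hC : centralizes (@total_rel A) al eq.
Local Notation D := (term3 d).
Hypothesis hD1 : forall x y : A, D x x y = y.
Hypothesis hD2 : forall x y : A, al x y -> D y x x = y.

Lemma al_refl x : al x x.
Proof. by case: hal. Qed.
Lemma al_sym x y : al x y -> al y x.
Proof. by case: hal => _ hs _ _; apply: hs. Qed.
Lemma al_trans x y z : al x y -> al y z -> al x z.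
Proof. by case: hal => _ _ ht _; apply: ht. Qed.
Lemma al_op f (x y : 'I_(arity f) -> A) :
  (forall i, al (x i) (y i)) -> al (op A f x) (op A f y).
Proof. by case: hal => _ _ _; apply. Qed.
Lemma al_D x y z x' y' z' :
  al x x' -> al y y' -> al z z' -> al (D x y z) (D x' y' z').
Proof. by move=> h1 h2 h3; apply: eval_cong => // -[[|[|k]] hk]. Qed.

Local Ltac al_compat := by do ! first [solve [auto] | apply: al_sym; solve [auto]
   | apply: al_refl | apply: al_D | apply: al_op => ? ].

(* Four corner principle: if two terms agree at three corners of a square
   whose second coordinate moves inside al, and are al-related at the fourth
   corner, then they agree there too.  (Apply the term condition to
   d(L, P, q), which equals q at the three known corners.) *)
Lemma four_corner (X Y : finType) (L P : term tau (X + Y))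
    (a0 a1 : X -> A) (b0 b1 : Y -> A) :
  (forall y, al (b0 y) (b1 y)) ->
  eval A (join_env a0 b0) L = eval A (join_env a0 b0) P ->
  eval A (join_env a0 b1) L = eval A (join_env a0 b1) P ->
  eval A (join_env a1 b0) L = eval A (join_env a1 b0) P ->
  al (eval A (join_env a1 b1) L) (eval A (join_env a1 b1) P) ->
  eval A (join_env a1 b1) L = eval A (join_env a1 b1) P.
Proof.
move=> hb h00 h01 h10 h11.
pose incl (v : X + Y) : option X + Y :=
  match v with inl x => inl (Some x) | inr y => inr y end.
pose q := eval A (join_env a1 b1) P.
pose t := d_term (rename_term incl L) (rename_term incl P) (tvar tau (inl None)).
pose ext (a : X -> A) (o : option X) := match o with None => q | Some x => a x end.
have E a b : eval A (join_env (ext a) b) t =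
    D (eval A (join_env a b) L) (eval A (join_env a b) P) q.
  rewrite /t eval_d_term !eval_rename; congr (D _ _ _);
  by congr (eval A _ _); apply: functional_extensionality => -[x|y].
have := @centralizes_fin tau A _ _ _ hC _ _ t (ext a0) (ext a1) b0 b1 (fun _ => I) hb.
rewrite !E h00 h01 h10 !hD1 => /(_ erefl) H.
by rewrite -[LHS](hD2 (al_sym h11)) -/q.
Qed.

Definition seq_env n (s : seq A) (x0 : A) (i : 'I_n) : A := nth x0 s i.
Definition xvar n m i (h : i < n) : term tau ('I_n + 'I_m) := tvar tau (inl (Ordinal h)).
Definition yvar n m i (h : i < m) : term tau ('I_n + 'I_m) := tvar tau (inr (Ordinal h)).

Lemma D_assoc x y z w s : al x y -> D (D y x z) w s = D y x (D z w s).
Proof.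
move=> hxy.
pose L := d_term (d_term (@yvar 4 1 0 isT) (@xvar 4 1 0 isT) (@xvar 4 1 1 isT))
                 (@xvar 4 1 2 isT) (@xvar 4 1 3 isT).
pose P := d_term (@yvar 4 1 0 isT) (@xvar 4 1 0 isT)
                 (d_term (@xvar 4 1 1 isT) (@xvar 4 1 2 isT) (@xvar 4 1 3 isT)).
have := @four_corner _ _ L P (seq_env [:: x; x; x; x] x) (seq_env [:: x; z; w; s] x)
  (seq_env [:: x] x) (seq_env [:: y] x).
rewrite /L /P !eval_d_term /= /seq_env /=; apply.
- by move=> [[|k] hk].
- by rewrite !hD1.
- by rewrite !hD1 !hD2.
- by rewrite !hD1.
- apply: (@al_trans _ (D z w s)).
  + by apply: (@al_trans _ (D (D x x z) w s)); [al_compat | rewrite !hD1; exact: al_refl].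
  + by apply: (@al_trans _ (D x x (D z w s))); [rewrite hD1; exact: al_refl | al_compat].
Qed.

Lemma D_shift x y z w : al x y -> D (D y x z) z w = D y x w.
Proof. by move=> hxy; rewrite D_assoc // hD1. Qed.

Lemma D_chain y g m o : al y m -> al g m -> D y g (D g m o) = D y m o.
Proof.
move=> hym hgm; have hgy : al g y by apply: (al_trans hgm); exact: al_sym.
by rewrite -D_assoc // hD2.
Qed.

Lemma D_inj x y r u : al r x -> al r y -> D x r u = D y r u -> x = y.
Proof.
have K z : al r z -> D (D z r u) u r = z by move=> hrz; rewrite D_shift // hD2.
by move=> hx hy E; rewrite -(K x hx) E K.
Qed.

Lemma op_D f (x y z : 'I_(arity f) -> A) : (forall i, al (x i) (y i)) ->
  op A f (fun i => D (y i) (x i) (z i)) = D (op A f y) (op A f x) (op A f z).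
Proof.
move=> hxy; pose V := (('I_(arity f) + 'I_(arity f)) + 'I_(arity f))%type.
pose L : term tau V :=
  tapp (fun i => d_term (tvar tau (inr i)) (tvar tau (inl (inl i))) (tvar tau (inl (inr i)))).
pose P : term tau V := d_term (tapp (fun i => tvar tau (inr i)))
  (tapp (fun i => tvar tau (inl (inl i)))) (tapp (fun i => tvar tau (inl (inr i)))).
have EL a b : eval A (join_env a b) L = op A f (fun i => D (b i) (a (inl i)) (a (inr i))).
  by rewrite /=; congr (op A f); apply: functional_extensionality => i; rewrite eval_d_term.
have EP a b : eval A (join_env a b) P =
    D (op A f b) (op A f (fun i => a (inl i))) (op A f (fun i => a (inr i))).
  by rewrite eval_d_term.
have Dxx (u : 'I_(arity f) -> A) : (fun i => D (x i) (x i) (u i)) = u.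
  by apply: functional_extensionality => i; rewrite hD1.
have := @four_corner _ _ L P (join_env x x) (join_env x z) x y hxy.
rewrite !EL !EP /= !Dxx !hD1; apply=> //.
- have -> : (fun i => D (y i) (x i) (x i)) = y.
    by apply: functional_extensionality => i; rewrite hD2.
  by rewrite hD2 //; apply: al_op.
- apply: (@al_trans _ (op A f z)).
  + by rewrite -{2}(Dxx z); apply: al_op => i; al_compat.
  + by rewrite -{1}(hD1 (op A f x) (op A f z)); apply: al_D; [apply: al_op | | ]; al_compat.
Qed.

End Affine.

Section Transfer.
Variable tau : signature.

Lemma centralizes_transfer (A B : algebra tau) (h : A -> B) (g : B -> A)
    (al be : A -> A -> Prop) (alB beB : B -> B -> Prop) :
  is_hom h -> cancel h g -> centralizes alB beB eq ->
  (forall x y, al x y -> alB (h x) (h y)) -> (forall x y, be x y -> beB (h x) (h y)) ->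
  centralizes al be eq.
Proof.
move=> hh hK hc h1 h2 n m t a a' b b' ha hb E.
have F a1 b1 : h (eval A (sum_env a1 b1) t) =
    eval B (sum_env (fun i => h (a1 i)) (fun j => h (b1 j))) t.
  by rewrite eval_hom // comp_join_env.
rewrite -[LHS]hK -[RHS]hK; congr g; rewrite !F.
by apply: hc => [i|j|]; [exact: h1 | exact: h2 | rewrite -!F E].
Qed.

Lemma iter_comm_hom (A B : algebra tau) (h : A -> B) k x y :
  is_hom h -> iter_comm (@total_rel A) k x y -> iter_comm (@total_rel B) k (h x) (h y).
Proof.
move=> hh; elim: k x y => [//|k IH] x y H de hde hc.
pose de' (u v : A) := de (h u) (h v).
have cde : is_congruence de'.
  case: hde => h1 h2 h3 h4; split; rewrite /de' => //.
  - by move=> ? ? ?; apply: h2.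
  - by move=> ? ? ? ? ?; apply: h3; eauto.
  - by move=> f u v huv; rewrite !hh; apply: h4.
apply: (H de' cde) => n m t a a' b b' _ hb.
rewrite /de' !eval_hom // !comp_join_env.
by apply: hc => [i|j] //; apply: IH; exact: hb.
Qed.

Lemma variety_image (Sigma : term tau nat -> term tau nat -> Prop) (A B : algebra tau)
    (h : A -> B) :
  is_hom h -> (forall b, exists a, h a = b) -> in_variety Sigma A -> in_variety Sigma B.
Proof.
move=> hh hs hA s t hst env.
have [lift hlift] : exists lift : nat -> A, forall k, h (lift k) = env k.
  by exists (fun k => proj1_sig (constructive_indefinite_description _ (hs (env k))))
    => k; case: (constructive_indefinite_description _ _).
have -> : env = (fun k => h (lift k)) by apply: functional_extensionality => k; rewrite hlift.
by rewrite -!eval_hom // (hA s t hst).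
Qed.

End Transfer.

Section Isomorphism.
Variable tau : signature.

Lemma iso_refl (A : algebra tau) : isomorphic A A.
Proof. by exists id, id. Qed.

Lemma iso_trans (A B C : algebra tau) : isomorphic A B -> isomorphic B C -> isomorphic A C.
Proof.
move=> [h [g [hh hK hK']]] [h' [g' [hh' hK2 hK2']]].
exists (fun a => h' (h a)), (fun c => g (g' c)); split.
- by move=> f x; rewrite hh hh'.
- by move=> a; rewrite hK2 hK.
- by move=> c; rewrite hK' hK2'.
Qed.

Lemma iso_otimes (B C C' : algebra tau) (plus : B -> B -> B)
    (T : forall f : sym tau, ('I_(arity f) -> C) -> B) (h : C -> C') (g : C' -> C) :
  is_hom h -> cancel h g -> cancel g h ->
  isomorphic (otimes plus T) (otimes plus (fun f c => T f (fun i => g (c i)))).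
Proof.
move=> hh hK hK'.
exists (fun p : otimes plus T =>
          (p.1, h p.2) : otimes plus (fun f c => T f (fun i => g (c i)))).
exists (fun p => (p.1, g p.2)); split.
- move=> f x /=; congr pair; last by rewrite hh.
  by congr (plus _ _); congr (T f); apply: functional_extensionality => i; rewrite hK.
- by move=> [a b] /=; rewrite hK.
- by move=> [a b] /=; rewrite hK'.
Qed.

End Isomorphism.

Section DifferenceTerm.
Variable tau : signature.
Variable Sigma : term tau nat -> term tau nat -> Prop.
Variable d : term tau 'I_3.
Hypothesis hd : difference_term Sigma d.
Local Notation D := (term3 d).

Lemma D_xxy (A : algebra tau) : in_variety Sigma A -> forall x y : A, D x x y = y.
Proof. by move=> hA x y; case: (hd hA (total_cong A) (a := x) (b := y) I). Qed.

Lemma D_yxx_abelian (A : algebra tau) : in_variety Sigma A -> abelian A ->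
  forall x y : A, total_rel x y -> D y x x = y.
Proof.
move=> hA hab x y _; case: (hd hA (total_cong A) (a := y) (b := x) I) => _ H.
exact/hab.
Qed.

Lemma D_yxx_central (A : algebra tau) (al : A -> A -> Prop) :
  in_variety Sigma A -> is_congruence al -> centralizes (@total_rel A) al eq ->
  forall x y : A, al x y -> D y x x = y.
Proof.
move=> hA hal hcen x y hxy; have [_ H] := hd hA hal (al_sym hal hxy).
have hcen' : centralizes al al eq by exact: centralizes_sub _ _ hcen.
exact/(tc_comm_trivial hcen').
Qed.

End DifferenceTerm.

(* Products Q (x)^T C with Q abelian, + on Q given by x + y := d(x, 0, y):
   the kernel of the projection onto C is centralized by 1.  The first
   component of a term value splits as d(value in Q, value at 0, transfer
   part), where the transfer part depends only on the C-components. *)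
Section AbelianExtension.
Variable tau : signature.
Variable Sigma : term tau nat -> term tau nat -> Prop.
Variable d : term tau 'I_3.
Hypothesis hd : difference_term Sigma d.
Local Notation D := (term3 d).
Variables (Q C : algebra tau) (zero : Q) (T : forall f : sym tau, ('I_(arity f) -> C) -> Q).
Hypothesis hQ : in_variety Sigma Q.
Hypothesis habQ : abelian Q.
Let P := otimes (fun x y => D x zero y) T.
Let hQ1 := D_xxy hd hQ.
Let hQ2 := D_yxx_abelian hd hQ habQ.
Let hQc := abelian_centralizes habQ.
Let hQcong := total_cong Q.

Lemma eval_otimes_snd V (env : V -> P) t :
  (eval P env t).2 = eval C (fun v => (env v).2) t.
Proof.
elim: t => [//|f ts IH] /=; congr (op C f).
by apply: functional_extensionality => i; exact: IH.
Qed.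

(* The contribution of the transfer maps to the value of t at C-values q. *)
Definition transfer_part V (t : term tau V) (q : V -> C) : Q :=
  (eval P (fun v => (zero, q v)) t).1.

Lemma eval_otimes_fst V (env : V -> P) t : (eval P env t).1 =
  D (eval Q (fun v => (env v).1) t) (eval Q (fun _ => zero) t)
    (transfer_part t (fun v => (env v).2)).
Proof.
elim: t => [v|f ts IH] /=; first by rewrite /transfer_part /= hQ2.
rewrite /transfer_part /=.
have -> : (fun i => (eval P env (ts i)).1) = (fun i =>
   D (eval Q (fun v => (env v).1) (ts i)) (eval Q (fun _ => zero) (ts i))
     (transfer_part (ts i) (fun v => (env v).2))).
  by apply: functional_extensionality => i; exact: IH.
have -> : (fun i => (eval P (fun v => (zero, (env v).2)) (ts i)).2) =
          (fun i => (eval P env (ts i)).2).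
  by apply: functional_extensionality => i; rewrite !eval_otimes_snd.
by rewrite (op_D hQcong hQc hQ1 hQ2) // (D_assoc hQcong hQc hQ1 hQ2).
Qed.

Lemma otimes_centralizes : centralizes (@total_rel P) (fun x y : P => x.2 = y.2) eq.
Proof.
move=> n m t a a' b b' _ hb E.
have Eb : (fun j => (b j).2) = (fun j => (b' j).2).
  by apply: functional_extensionality => j; exact: hb.
have S1 (a1 : 'I_n -> P) (b1 : 'I_m -> P) : (eval P (sum_env a1 b1) t).1 =
   D (eval Q (sum_env (fun i => (a1 i).1) (fun j => (b1 j).1)) t) (eval Q (fun _ => zero) t)
     (transfer_part t (sum_env (fun i => (a1 i).2) (fun j => (b1 j).2))).
  rewrite eval_otimes_fst; congr (D (eval Q _ t) _ (transfer_part t _));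
  by apply: functional_extensionality => -[i|j].
have S2 (a1 : 'I_n -> P) (b1 : 'I_m -> P) : (eval P (sum_env a1 b1) t).2 =
    eval C (sum_env (fun i => (a1 i).2) (fun j => (b1 j).2)) t.
  rewrite eval_otimes_snd; congr (eval C _ t);
  by apply: functional_extensionality => -[i|j].
have E1 := congr1 fst E; rewrite !S1 Eb in E1.
have {}E1 := D_inj hQcong hQc hQ1 hQ2 I I E1.
apply: injective_projections; last by rewrite !S2 Eb.
by rewrite !S1 Eb (hQc (a := fun i => (a i).1) (fun=> I) (fun=> I) E1).
Qed.

End AbelianExtension.

Lemma iterated_nilpotent (tau : signature) (Sigma : term tau nat -> term tau nat -> Prop)
    (d : term tau 'I_3) (hd : difference_term Sigma d) k (C : algebra tau) :
  iterated Sigma d k C ->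
  forall A : algebra tau, in_variety Sigma A -> isomorphic A C -> nilpotent A k.
Proof.
elim=> [Q hQ habQ | {}k C' Q zero T hit IH hQ habQ] A hA [h [g [hh hK hK']]].
  by apply: tc_comm_trivial; apply: (centralizes_transfer hh hK (abelian_centralizes habQ)).
pose p (a : A) : C' := (h a).2.
have hp : is_hom p by move=> f z; rewrite /p hh.
have hC' : in_variety Sigma C'.
  by apply: (variety_image hp) => // c; exists (g (zero, c)); rewrite /p hK'.
have nilC' := IH C' hC' (iso_refl C').
apply: tc_comm_trivial; apply: (centralizes_transfer hh hK (otimes_centralizes hd hQ habQ)) => //.
by move=> u v /(iter_comm_hom hp) /nilC'.
Qed.

Lemma sig_eq (T : Type) (Pr : T -> Prop) (x y : {z : T | Pr z}) :
  proj1_sig x = proj1_sig y -> x = y.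
Proof. by apply: eq_sig_hprop => z; exact: proof_irrelevance. Qed.

(* The quotient A/r of an algebra by a congruence r, with classes
   represented as predicates r a and a chosen representative for each. *)
Section Quotient.
Variable tau : signature.
Variable A : algebra tau.
Variable r : A -> A -> Prop.
Hypothesis hr : is_congruence r.

Definition quot_carrier := {P : A -> Prop | exists a, P = r a}.
Definition cls (a : A) : quot_carrier := exist _ (r a) (ex_intro _ a erefl).
Definition rep (x : quot_carrier) : A :=
  proj1_sig (constructive_indefinite_description _ (proj2_sig x)).

Lemma cls_rep x : cls (rep x) = x.
Proof.
apply: sig_eq; rewrite /rep /=.
by case: (constructive_indefinite_description _ _).
Qed.

Lemma cls_eq a b : cls a = cls b <-> r a b.
Proof.
case: hr => hrf hs ht _; split.
- by move=> /(congr1 (@proj1_sig _ _)) /= E; apply: hs; rewrite -E.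
- move=> hab; apply: sig_eq => /=; apply: functional_extensionality => z.
  apply: propositional_extensionality.
  by split=> h; [exact: ht (hs _ _ hab) h | exact: ht hab h].
Qed.

Lemma rep_cls a : r (rep (cls a)) a.
Proof. by apply/cls_eq; rewrite cls_rep. Qed.

Definition quot : algebra tau :=
  @Algebra tau quot_carrier (fun f x => cls (op A f (fun i => rep (x i)))).

Lemma cls_hom : @is_hom tau A quot cls.
Proof.
move=> f x /=; apply/cls_eq; case: hr => _ hs _ ho.
by apply: ho => i; apply: hs; exact: rep_cls.
Qed.

Lemma eval_quot V (env : V -> quot) t :
  eval quot env t = cls (eval A (fun v => rep (env v)) t).
Proof.
rewrite (eval_hom _ _ cls_hom); congr (eval quot _ t).
by apply: functional_extensionality => v; rewrite cls_rep.
Qed.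

Lemma quot_variety Sigma : in_variety Sigma A -> in_variety Sigma quot.
Proof. by apply: (variety_image cls_hom) => c; exists (rep c); exact: cls_rep. Qed.

Section Induced.
Variable th : A -> A -> Prop.
Hypothesis hth : is_congruence th.
Hypothesis r_th : forall a b, r a b -> th a b.

Definition induced (x y : quot) : Prop := th (rep x) (rep y).

Lemma induced_cls a b : induced (cls a) (cls b) <-> th a b.
Proof.
case: hth => _ hs ht _; have hra c : th (rep (cls c)) c by apply: r_th; exact: rep_cls.
rewrite /induced; split=> h.
- exact: ht (hs _ _ (hra a)) (ht _ _ _ h (hra b)).
- exact: ht (hra a) (ht _ _ _ h (hs _ _ (hra b))).
Qed.

Lemma induced_cong : is_congruence induced.
Proof.
case: (hth) => hrf hs ht hop; split.
- by move=> x; apply: hrf.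
- by move=> x y; apply: hs.
- by move=> x y z; apply: ht.
- by move=> f x y hxy; apply/induced_cls; apply: hop.
Qed.

End Induced.

End Quotient.

Lemma quot_iter_comm (tau : signature) (A : algebra tau) (r : A -> A -> Prop)
    (hr : is_congruence r) k :
  (forall a b, r a b -> iter_comm (@total_rel A) k a b) ->
  forall a b, iter_comm (@total_rel (quot r)) k (cls r a) (cls r b) ->
              iter_comm (@total_rel A) k a b.
Proof.
elim: k => [//|k IH] hsub a b H.
have hsub' a' b' : r a' b' -> iter_comm (@total_rel A) k a' b'.
  by move/hsub; exact: iter_comm_succ.
have hth := iter_comm_cong A k.+1.
apply/(induced_cls hr hth hsub); apply: H; first exact: induced_cong.
move=> n m t u u' v v' _ hv; rewrite !(eval_quot hr) !(induced_cls hr hth hsub).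
rewrite !comp_join_env; apply: tc_comm_centralizes => // j.
by apply: IH => //; rewrite !cls_rep; exact: hv.
Qed.

Lemma quot_nilpotent (tau : signature) (A : algebra tau) n :
  nilpotent (quot (iter_comm (@total_rel A) n)) n.
Proof.
move=> x y; split; last by move=> ->; apply: cong_refl; exact: iter_comm_cong.
rewrite -(cls_rep x) -(cls_rep y) => H; apply/cls_eq; first exact: iter_comm_cong.
exact: (quot_iter_comm (iter_comm_cong A n)) H.
Qed.

(* The al-block Q of o is an abelian
   algebra under f^Q(x) = d(f(x), f(o,...,o), o), and A is isomorphic to
   Q (x)^T (A/al) with x + y := d(x, o, y) on Q, via
   a |-> (d(a, rep [a], o), [a]) and (e, c) |-> d(e, o, rep c). *)
Section Decomposition.
Variable tau : signature.
Variable Sigma : term tau nat -> term tau nat -> Prop.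
Variable d : term tau 'I_3.
Hypothesis hd : difference_term Sigma d.
Local Notation D := (term3 d).
Variable A : algebra tau.
Hypothesis hA : in_variety Sigma A.
Variable al : A -> A -> Prop.
Hypothesis hal : is_congruence al.
Hypothesis hC : centralizes (@total_rel A) al eq.
Variable o : A.

Let hD1 := D_xxy hd hA.
Let hD2 := D_yxx_central hd hA hal hC.
Let a_refl := al_refl hal.
Let a_sym := al_sym hal.
Let a_trans := al_trans hal.
Let a_D := al_D d hal.
Let a_op := al_op hal.

Definition block := {e : A | al o e}.

Lemma in_block (x : block) : al o (proj1_sig x).
Proof. exact: proj2_sig x. Qed.

Lemma D_to_block x r : al x r -> al o (D x r o).
Proof.
move=> hxr; apply: (a_trans (y := D r r o)); first by rewrite hD1; exact: a_refl.
by apply: a_D; [exact: a_sym | exact: a_refl | exact: a_refl].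
Qed.

Lemma block_op_in f (x : 'I_(arity f) -> block) :
  al o (D (op A f (fun i => proj1_sig (x i))) (op A f (fun _ => o)) o).
Proof. by apply: D_to_block; apply: a_op => i; apply: a_sym; exact: in_block. Qed.

Definition block_alg : algebra tau := @Algebra tau block (fun f x => exist _ _ (block_op_in x)).

Lemma eval_block V (env : V -> block_alg) t :
  proj1_sig (eval block_alg env t) =
  D (eval A (fun v => proj1_sig (env v)) t) (eval A (fun _ => o) t) o.
Proof.
have Eo u : al (eval A (fun _ => o) u) (eval A (fun v => proj1_sig (env v)) u).
  by apply: eval_cong => // v; exact: in_block.
elim: t => [v|f ts IH] /=; first by rewrite hD2 //; exact: in_block.
rewrite (functional_extensionality _ _ IH) (op_D hal hC hD1 hD2); last by move=> i; exact: Eo.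
by rewrite (D_shift hal hC hD1 hD2) //; apply: a_op => i; exact: Eo.
Qed.

Lemma block_variety : in_variety Sigma block_alg.
Proof.
move=> s t hst env; apply: sig_eq; rewrite !eval_block.
by rewrite (hA hst (fun v => proj1_sig (env v))) (hA hst (fun _ => o)).
Qed.

Lemma block_abelian : abelian block_alg.
Proof.
apply: tc_comm_trivial => n m t a a' b b' _ _ E.
pose vals (a : 'I_n -> block_alg) (b : 'I_m -> block_alg) :=
  sum_env (fun i => proj1_sig (a i)) (fun j => proj1_sig (b j)).
have F a1 b1 : proj1_sig (eval block_alg (sum_env a1 b1) t) =
   D (eval A (vals a1 b1) t) (eval A (fun _ => o) t) o.
  rewrite eval_block; congr (D (eval A _ t) _ _).
  by apply: functional_extensionality => -[i|j].
have K a1 b1 : D (proj1_sig (eval block_alg (sum_env a1 b1) t)) o (eval A (fun _ => o) t) =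
    eval A (vals a1 b1) t.
  have Eo : al (eval A (fun _ => o) t) (eval A (vals a1 b1) t).
    by apply: eval_cong => // -[i|j] /=; exact: in_block.
  by rewrite F (D_shift hal hC hD1 hD2) // hD2.
apply: sig_eq; rewrite !F; congr (D _ _ _).
apply: (hC (a := fun i => proj1_sig (a i))) => //; last by rewrite -!K E.
by move=> j; apply: (a_trans (a_sym (in_block _))); exact: in_block.
Qed.

Definition block_zero : block_alg := exist _ o (a_refl o).

(* The transfer map: the defect of the representative function rep. *)
Definition block_transfer f (c : 'I_(arity f) -> quot al) : block_alg :=
  exist _ _ (D_to_block (a_sym (rep_cls hal (op A f (fun i => rep (c i)))))).

Definition extension := otimes (fun x y => D x block_zero y) block_transfer.

Definition to_extension (a : A) : extension :=
  (exist _ _ (D_to_block (a_sym (rep_cls hal a))), cls al a).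
Definition of_extension (p : extension) : A := D (proj1_sig p.1) o (rep p.2).

Lemma block_plus (x y : block_alg) :
  proj1_sig (D x block_zero y) = D (proj1_sig x) o (proj1_sig y).
Proof.
rewrite /term3 eval_block.
have -> : (fun v => proj1_sig (env3 x block_zero y v)) = env3 (proj1_sig x) o (proj1_sig y).
  by apply: functional_extensionality => -[[|[|k]] hk].
have Eo : eval A (fun _ => o) d = o.
  by rewrite -{2}(hD1 o o) /term3; congr (eval A _ d);
     apply: functional_extensionality => -[[|[|k]] hk].
rewrite Eo -/(D (proj1_sig x) o (proj1_sig y)) hD2 //.
apply: (a_trans (y := D o o (proj1_sig y))); first by rewrite hD1; exact: in_block.
by apply: a_D; [exact: in_block | exact: a_refl | exact: a_refl].
Qed.

Lemma to_extension_hom : is_hom to_extension.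
Proof.
move=> f x; rewrite /to_extension; congr pair; last by rewrite (cls_hom hal).
have hx i : al (rep (cls al (x i))) (x i) by exact: rep_cls.
have hfx : al (op A f (fun i => rep (cls al (x i)))) (op A f x) by exact: a_op.
apply: sig_eq => /=; rewrite block_plus /=.
rewrite (op_D hal hC hD1 hD2) // (D_shift hal hC hD1 hD2 (op A f (fun _ => o))) //.
rewrite (D_assoc hal hC hD1 hD2) // hD1 (D_chain hal hC hD1 hD2); last 2 first.
- exact: a_trans (a_sym hfx) (a_sym (rep_cls hal _)).
- exact: a_sym (rep_cls hal _).
by rewrite (cls_hom hal).
Qed.

Lemma to_extensionK : cancel to_extension of_extension.
Proof.
move=> a; have ha : al (rep (cls al a)) a by exact: rep_cls.
by rewrite /of_extension /= (D_shift hal hC hD1 hD2) // hD2.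
Qed.

Lemma of_extensionK : cancel of_extension to_extension.
Proof.
move=> [e c]; rewrite /to_extension /of_extension /=.
have E : cls al (D (proj1_sig e) o (rep c)) = c.
  rewrite -[RHS](cls_rep c); apply/(cls_eq hal).
  apply: (a_trans (y := D o o (rep c))); last by rewrite hD1; exact: a_refl.
  by apply: a_D; [exact: a_sym (in_block e) | exact: a_refl | exact: a_refl].
congr pair => //; apply: sig_eq => /=.
by rewrite E (D_shift hal hC hD1 hD2) ?hD2 //; exact: in_block.
Qed.

Lemma decomposition : isomorphic A extension.
Proof.
exists to_extension, of_extension.
by split; [exact: to_extension_hom | exact: to_extensionK | exact: of_extensionK].
Qed.

End Decomposition.

(* The one-element algebra, used as abelian factor when A is empty. *)
Definition unit_alg (tau : signature) : algebra tau := @Algebra tau unit (fun _ _ => tt).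

Lemma unit_variety tau (Sigma : term tau nat -> term tau nat -> Prop) :
  in_variety Sigma (unit_alg tau).
Proof. by move=> s t _ env; case: (eval _ _ s); case: (eval _ _ t). Qed.

Lemma unit_abelian tau : abelian (unit_alg tau).
Proof.
apply: tc_comm_trivial => n m t *.
by case: (eval _ _ t); case: (eval _ _ t).
Qed.

Lemma iso_empty tau (A B : algebra tau) : (A -> False) -> (B -> False) -> isomorphic A B.
Proof.
move=> nA nB; exists (fun a => False_rect _ (nA a)), (fun b => False_rect _ (nB b)).
split=> [f x|a|b]; last by case: (nB b).
- by case: (nA (op A f x)).
- by case: (nA a).
Qed.

(* Nilpotent algebras are iterated abelian extensions: by induction on the
   class, split A along the central congruence [1_A]_(n+1) into its abelian
   block and the quotient A/[1_A]_(n+1), which is nilpotent of class n+1. *)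
Lemma nilpotent_iterated (tau : signature) (Sigma : term tau nat -> term tau nat -> Prop)
    (d : term tau 'I_3) (hd : difference_term Sigma d) n (A : algebra tau) :
  in_variety Sigma A -> nilpotent A n.+1 ->
  exists C : algebra tau, iterated Sigma d n.+1 C /\ isomorphic A C.
Proof.
elim: n A => [|n IH] A hA hnil.
  by exists A; split; [exact: iterated_one | exact: iso_refl].
pose al := iter_comm (@total_rel A) n.+1.
have hal : is_congruence al := iter_comm_cong A n.+1.
have hcen : centralizes (@total_rel A) al eq.
  by apply: (centralizes_eq hnil); exact: tc_comm_centralizes.
have [C' [hit [h' [g' [hh' hK' hK'']]]]] :=
  IH _ (quot_variety hal hA) (@quot_nilpotent _ A n.+1).
case: (classic (inhabited A)) => [[o]|hne].
- exists (otimes (fun x y => term3 d x (block_zero hd hA hal o) y)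
     (fun f c => block_transfer hd hA hal o (fun i => g' (c i)))).
  split.
    by apply: iterated_succ => //; [exact: block_variety | exact: block_abelian].
  apply: iso_trans (iso_otimes _ _ hh' hK' hK'').
  exact: decomposition.
- have nA (a : A) : False by apply: hne; exact: inhabits a.
  exists (otimes (fun x y => term3 d x (tt : unit_alg tau) y)
                 (fun f (c : 'I_(arity f) -> C') => (tt : unit_alg tau))).
  split; first by apply: iterated_succ => //; [exact: unit_variety | exact: unit_abelian].
  by apply: iso_empty => // -[_ c]; exact: nA (rep (g' c)).
Qed.

Theorem proposition2p8 (tau : signature)
    (Sigma : term tau nat -> term tau nat -> Prop) (d : term tau 'I_3)
    (hd : difference_term Sigma d)
    (A : algebra tau) (hA : in_variety Sigma A) (n : nat) (hn : 1 <= n) :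
  nilpotent A n <-> exists C : algebra tau, iterated Sigma d n C /\ isomorphic A C.
Proof.
split.
- by case: n hn => [//|n] _; exact: nilpotent_iterated.
- by move=> [C [hit hiso]]; exact: (iterated_nilpotent hd hit hA hiso).
Qed.
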